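(* For a given temporal graph $G$ on $n$ vertices with lifetime $L$, one can build a temporal $\lfloor\log n\rfloor$-spanner $H$ of $G$ of size $O(Ln)$.
   Context: A temporal graph is an undirected graph $G=(V,E)$ with a labeling $\lambda:E\to\mathbb{N}^+$; its lifetime $L$ is the number of distinct labels used. A temporal path is a path whose traversed edges have non-decreasing labels in the order of traversal; its length is its number of edges, and $d_G(u,v)$ is the minimum length of a temporal path from $u$ to $v$ in $G$ ($+\infty$ if none). A temporal $\alpha$-spanner of $G$ is a subgraph $H$ with $V(H)=V$, $E(H)\subseteq E$ (same labels), such that $d_H(u,v)\le\alpha\, d_G(u,v)$ for all $u,v\in V$. Size means number of edges. *)

From mathcomp Require Import all_boot.
Set Implicit Arguments. Unset Strict Implicit. Unset Printing Implicit Defensive.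

(* Only the
   values of lam on E matter. *)
Definition temporal_graph (T : finType) (E : {set {set T}})
    (lam : {set T} -> nat) : Prop :=
  forall e, e \in E -> #|e| = 2 /\ 0 < lam e.

Definition lifetime (T : finType) (E : {set {set T}}) (lam : {set T} -> nat)
  : nat := size (undup [seq lam e | e <- enum E]).

(* [tpath_from E lam x l p]: starting at x, having last used label l,
   the walk x -> p_1 -> ... -> p_k uses edges of E whose labels are
   non-decreasing (and at least l). *)
Fixpoint tpath_from (T : finType) (E : {set {set T}}) (lam : {set T} -> nat)
    (x : T) (l : nat) (p : seq T) : bool :=
  match p with
  | [::] => true
  | y :: p' =>
      ([set x; y] \in E) && (l <= lam [set x; y])
      && tpath_from E lam y (lam [set x; y]) p'
  end.

(* A temporal path from u to v: the vertex sequence u :: p is a path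
   (no repeated vertex) ending in v, whose edges have non-decreasing labels.
   Its length (number of edges) is size p. *)
Definition is_tpath (T : finType) (E : {set {set T}}) (lam : {set T} -> nat)
    (u v : T) (p : seq T) : bool :=
  [&& uniq (u :: p), last u p == v & tpath_from E lam u 0 p].

(* H is a temporal alpha-spanner of (E, lam): H is a subgraph (same vertex set,
   subset of edges, same labels) and d_H(u,v) <= alpha * d_G(u,v) for all u v.
   The latter is unfolded: every temporal path in G of length k from u to v
   can be matched by a temporal path in H from u to v of length <= alpha*k
   (equivalent to the inequality on minimum lengths, with +oo conventions). *)
Definition temporal_spanner (T : finType) (E : {set {set T}})
    (lam : {set T} -> nat) (H : {set {set T}}) (alpha : nat) : Prop :=
  H \subset E /\
  forall (u v : T) (p : seq T), is_tpath E lam u v p ->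
    exists q : seq T, is_tpath H lam u v q /\ size q <= alpha * size p.

From mathcomp Require Import all_boot zify.
From Stdlib Require Import Classical.
Set Implicit Arguments. Unset Strict Implicit. Unset Printing Implicit Defensive.

(* For each label [l], keep an edge of label [l] only when its ends are not yet
   joined by a walk of at most [t = trunc_log 2 n] kept edges of label [l].
   Every edge of G is then replaced by such a walk with its own label, so a
   temporal path of length k becomes a temporal walk of length at most t k,
   which can be shortened back to a path.  The kept edges of one label form a
   graph without cycles of length at most t + 1, and such a graph has at most
   16 n edges: otherwise it has a subgraph of minimum degree above 16, and the
   non-backtracking walks of length (t + 1)/2 from one vertex of it, which end
   at pairwise distinct vertices for lack of short cycles, would have at
   least 16^((t + 1)/2) >= 2^(t + 1) > n ends. *)

Section StaticGraph.
Variable T : finType.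
Implicit Types (F G S : {set {set T}}) (W : {set T}) (e : {set T}) (s : seq T).

Definition adj F : rel T := fun a b => [set a; b] \in F.

Definition pair_edges F := forall e, e \in F -> #|e| = 2.

Definition nbrs F W x := [set y in W | adj F x y].

Lemma adjC F : symmetric (adj F).
Proof. by move=> a b; rewrite /adj setUC. Qed.

Lemma adj_subset F G : F \subset G -> subrel (adj F) (adj G).
Proof. by move=> /subsetP FG a b /FG. Qed.

Lemma adj_neq F a b : pair_edges F -> adj F a b -> a != b.
Proof. by move=> F2 /F2; case: eqP => // ->; rewrite setUid cards1. Qed.

Lemma sorted_adj_rev F s : sorted (adj F) (rev s) = sorted (adj F) s.
Proof. by rewrite rev_sorted; apply: eq_sorted => a b; rewrite adjC. Qed.

Lemma pair_edges_card_lt2 F : pair_edges F -> #|T| < 2 -> F = set0.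
Proof.
move=> F2 T2; apply/setP => e; rewrite inE; apply/negbTE/negP => /F2 e2.
by have := max_card (mem e); rewrite e2 leqNgt T2.
Qed.

Lemma card_bigcup_disjoint_ge (I : finType) (N : {set I}) (A : I -> {set T}) k :
  {in N &, forall i j, i != j -> [disjoint A i & A j]} ->
  {in N, forall i, k <= #|A i|} -> #|N| * k <= #|\bigcup_(i in N) A i|.
Proof.
move=> disjA geA; pose B i := if i \in N then A i else set0.
have -> : \bigcup_(i in N) A i = \bigcup_i B i by rewrite big_mkcond.
rewrite -[#|\bigcup_i _|]sum1_card partition_disjoint_bigcup; last first.
  move=> i j ij; rewrite /B -setI_eq0.
  case: ifP => iN; case: ifP => jN; rewrite ?set0I ?setI0 //.
  by rewrite setI_eq0 disjA.
rewrite -sum_nat_const big_mkcond /=; apply: leq_sum => i _.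
by rewrite sum1_card /B; case: ifP => // /geA.
Qed.

Definition short_walk F t u v :=
  exists s, [/\ path (adj F) u s, last u s = v & size s <= t].

Lemma short_walk0 F u : short_walk F 0 u u.
Proof. by exists [::]. Qed.

Lemma short_walk_edge F u v : adj F u v -> short_walk F 1 u v.
Proof. by exists [:: v]; rewrite /= andbT. Qed.

Lemma short_walk_le F n m u v : n <= m -> short_walk F n u v -> short_walk F m u v.
Proof. by move=> nm [s [us sv sn]]; exists s; split=> //; apply: leq_trans nm. Qed.

Lemma short_walk_subset F G t u v :
  F \subset G -> short_walk F t u v -> short_walk G t u v.
Proof.
by move=> FG [s [us sv st]]; exists s; split=> //; apply: sub_path us; apply: adj_subset.
Qed.

Lemma short_walk_cat F n m u v w :
  short_walk F n u v -> short_walk F m v w -> short_walk F (n + m) u w.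
Proof.
move=> [s [us <- sn]] [s' [vs' <- s'm]]; exists (s ++ s').
by rewrite cat_path last_cat us vs' size_cat leq_add.
Qed.

Lemma short_walk_sym F t u v : short_walk F t u v -> short_walk F t v u.
Proof.
move=> [s [us <- st]]; exists (rev (belast u s)); split.
- by rewrite rev_path; apply: sub_path us => a b; rewrite adjC.
- by case: s {us st} => //= a s; rewrite rev_cons last_rcons.
- by rewrite size_rev size_belast.
Qed.

Lemma short_walk_set2 F t u v u' v' : [set u; v] = [set u'; v'] ->
  short_walk F t u v -> short_walk F t u' v'.
Proof.
move=> uv_eq walk_uv.
have u'_in : u' \in [set u; v] by rewrite uv_eq set21.
have v'_in : v' \in [set u; v] by rewrite uv_eq set22.
have u_in : u \in [set u'; v'] by rewrite -uv_eq set21.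
have v_in : v \in [set u'; v'] by rewrite -uv_eq set22.
move: u_in v_in; case/set2P: u'_in => ->; case/set2P: v'_in => ->;
  rewrite ?setUid => u_in v_in.
- by move/set1P: v_in walk_uv => ->.
- exact: walk_uv.
- exact: short_walk_sym.
- by move/set1P: u_in walk_uv => ->.
Qed.

(* a cycle of length at most [t.+1] through the edge [{a, b}] *)
Definition has_short_cycle F t :=
  exists a b, [set a; b] \in F /\ short_walk (F :\ [set a; b]) t a b.

Fixpoint nonbacktracking s : bool :=
  if s is a :: (_ :: c :: _) as s' then (a != c) && nonbacktracking s' else true.

Lemma nonbacktracking_cons3 a b c w :
  nonbacktracking [:: a, b, c & w] = (a != c) && nonbacktracking [:: b, c & w].
Proof. by []. Qed.

Lemma nonbacktracking_behead x s : nonbacktracking (x :: s) -> nonbacktracking s.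
Proof. by case: s => [|y [|z s]] //= /andP[]. Qed.

Lemma nonbacktracking_cat u y x v :
  nonbacktracking (u ++ [:: y, x & v]) =
  nonbacktracking (u ++ [:: y; x]) && nonbacktracking [:: y, x & v].
Proof.
elim: u => [|a u IH] //; case: u IH => [|b [|c u]] IH /=; first by rewrite andbT.
all: by move: IH; rewrite /= => ->; rewrite andbA.
Qed.

Lemma nonbacktracking_rev s : nonbacktracking (rev s) = nonbacktracking s.
Proof.
elim: s => [|a [|b [|c w]] IH] //.
rewrite nonbacktracking_cons3 -IH !rev_cons -!cats1 -!catA /=.
by rewrite (nonbacktracking_cat _ c b [:: a]) /= andbT andbC eq_sym.
Qed.

Lemma closed_walk_short_cycle F t x y s : uniq (x :: y :: s) -> s != [::] ->
  path (adj F) x (y :: rcons s x) -> size s < t -> has_short_cycle F t.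
Proof.
rewrite /= inE negb_or => /andP[/andP[x_ne_y x_s] /andP[y_s _]] s_nonnil.
case/andP => xy; rewrite rcons_path => /andP[ys last_x] st.
have last_s : last y s \in s.
  by case: s s_nonnil {x_s y_s ys last_x st} => //= a s _; apply: mem_last.
exists y, x; split; first by rewrite -[_ \in _]/(adj F y x) adjC.
exists (rcons s x); rewrite last_rcons size_rcons rcons_path; split => //.
apply/andP; split.
  apply: (sub_in_path (P := [pred a | a != x]) (e := adj F)) ys.
    move=> a b; rewrite !inE => ax bx ab; rewrite /adj in_setD1 andbC.
    rewrite -[_ \in F]/(adj F a b) ab; apply: contraNneq ax => ab_eq.
    have := set22 y x; rewrite -ab_eq.
    by case/set2P => [->|bx']; [rewrite eqxx | rewrite bx' eqxx in bx].
  by rewrite /= eq_sym x_ne_y; apply/allP => a a_s; apply: contraNneq x_s => <-.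
rewrite /adj in_setD1 andbC -[_ \in F]/(adj F _ x) last_x; apply/eqP => ly_eq.
have := set21 (last y s) x; rewrite ly_eq => /set2P[ly|lx].
  by rewrite -ly last_s in y_s.
by rewrite -lx last_s in x_s.
Qed.

Lemma nonbacktracking_uniq F t c : pair_edges F -> ~ has_short_cycle F t ->
  sorted (adj F) c -> nonbacktracking c -> size c <= t.+2 -> uniq c.
Proof.
move=> F2 acyclic; elim: c => // x s IH xs_path xs_nb xs_size.
have s_uniq : uniq s.
  apply: IH; first exact: path_sorted xs_path.
    exact: nonbacktracking_behead xs_nb.
  exact: ltnW.
rewrite /= s_uniq andbT; apply/negP => x_s.
move: xs_path xs_nb xs_size s_uniq; case/splitPr: x_s => s1 s2.
rewrite -cat_rcons [sorted _ _]/= cat_path => /andP[walk _] xs_nb xs_size.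
rewrite cat_uniq rcons_uniq => /andP[uniq_c _].
case: s1 => [|y [|z s1]] in walk xs_nb xs_size uniq_c *.
- by move: walk => /= /andP[/(adj_neq F2)]; rewrite eqxx.
- by rewrite /= eqxx in xs_nb.
apply: acyclic; apply: (@closed_walk_short_cycle _ _ x y (z :: s1)) => //.
by move: xs_size; rewrite /= size_cat size_rcons; lia.
Qed.

Section NonBacktrackingWalks.
Variables (F : {set {set T}}) (W : {set T}).

(* endpoints of the non-backtracking walks of length [r] from [x] inside [W],
   the walk being entered from [p] *)
Fixpoint ends r p x : {set T} :=
  if r is r'.+1 then \bigcup_(y in nbrs F W x :\ p) ends r' x y else [set x].

Lemma ends_walk r p x z : z \in ends r p x -> exists s,
  [/\ path (adj F) x s, last x s = z, size s = r & nonbacktracking [:: p, x & s]].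
Proof.
elim: r p x => [|r IH] p x /=; first by move/set1P ->; exists [::].
case/bigcupP => y; rewrite !inE => /and3P[yp _ xy] /IH[s [ys <- sr nb]].
exists (y :: s); split; [by rewrite /= xy | by [] | by rewrite /= sr |].
by rewrite eq_sym yp; exact: nb.
Qed.

Lemma ends_disjoint t r x y y' : pair_edges F -> ~ has_short_cycle F t ->
  2 * r < t -> y != y' -> adj F x y -> adj F x y' ->
  [disjoint ends r x y & ends r x y'].
Proof.
move=> F2 acyclic rt yy' xy xy'; rewrite -setI_eq0; apply/eqP/setP => z; rewrite !inE.
apply/negbTE/andP => -[/ends_walk[s [ys ys_z sr nb]] /ends_walk[s' [ys' ys'_z sr' nb']]].
have glued_uniq : uniq (rev [:: x, y & s] ++ y' :: s').
  apply: (nonbacktracking_uniq F2 acyclic).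
  - by rewrite sorted_cat_cons -rev_cons sorted_adj_rev /= adjC xy' xy ys ys'.
  - have rev_xys : rev [:: x, y & s] = rev s ++ [:: y; x].
      by rewrite !rev_cons -!cats1 -catA.
    rewrite rev_xys -catA nonbacktracking_cat -rev_xys nonbacktracking_rev nb.
    by rewrite nonbacktracking_cons3 yy' nb'.
  - by rewrite size_cat size_rev /= sr sr'; lia.
have z_s : z \in rev [:: x, y & s] by rewrite mem_rev -ys_z in_cons mem_last orbT.
have z_s' : z \in y' :: s' by rewrite -ys'_z mem_last.
by move: glued_uniq; rewrite cat_uniq => /and3P[_ /hasPn/(_ z z_s')]; rewrite z_s.
Qed.

Lemma ends_card t d r p x : pair_edges F -> ~ has_short_cycle F t ->
  {in W, forall v, d < #|nbrs F W v|} -> 2 * r <= t.+1 -> x \in W ->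
  d ^ r <= #|ends r p x|.
Proof.
move=> F2 acyclic deg_gt; elim: r p x => [|r IH] p x rt xW /=; first by rewrite cards1.
have fwd_deg : d <= #|nbrs F W x :\ p|.
  have := deg_gt x xW; rewrite (cardsD1 p).
  by case: (_ \in _); rewrite ?add1n // => /ltnW.
rewrite expnS; apply: (@leq_trans (#|nbrs F W x :\ p| * d ^ r)).
  by rewrite leq_mul2r fwd_deg orbT.
apply: card_bigcup_disjoint_ge => [y y' | y]; rewrite !inE.
  move=> /and3P[_ _ xy] /and3P[_ _ xy'] yy'.
  by apply: ends_disjoint F2 acyclic _ yy' xy xy'; lia.
by case/and3P => _ yW _; apply: IH => //; lia.
Qed.

End NonBacktrackingWalks.

Lemma card_edges_within_setD1 F W x : pair_edges F -> x \in W ->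
  #|[set e in F | e \subset W]| <= #|[set e in F | e \subset W :\ x]| + #|nbrs F W x|.
Proof.
move=> F2 xW.
have edges_sub : [set e in F | e \subset W] \subset
    [set e in F | e \subset W :\ x] :|: [set [set x; y] | y in nbrs F W x].
  apply/subsetP => e; rewrite !inE => /andP[eF eW].
  have [xe|xNe] := boolP (x \in e); last first.
    rewrite eF /=; apply/orP; left; apply/subsetP => z ze.
    by rewrite !inE (subsetP eW) // andbT; apply: contraNneq xNe => <-.
  have [y e_xy] : exists y, e = [set x; y].
    have /eqP/cards2P[a [b [_ e_ab]]] := F2 e eF.
    by move: xe; rewrite e_ab => /set2P[<-|<-]; [exists b | exists a; rewrite setUC].
  apply/orP; right; apply/imsetP; exists y => //.
  by rewrite inE /adj -e_xy eF andbT (subsetP eW) // e_xy set22.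
apply: leq_trans (subset_leq_card edges_sub) _.
apply: leq_trans (leq_card_setU _ _) _.
by rewrite leq_add2l leq_imset_card.
Qed.

Lemma card_edges_within_le F d W : pair_edges F ->
  (forall W', W' \subset W -> W' != set0 -> exists2 x, x \in W' & #|nbrs F W' x| <= d) ->
  #|[set e in F | e \subset W]| <= d * #|W|.
Proof.
move=> F2; have [n] := ubnP #|W|; elim: n W => // n IH W Wn low_deg.
have [->|W_ne] := eqVneq W set0.
  rewrite cards0 muln0 leqn0 cards_eq0; apply/eqP/setP => e; rewrite !inE subset0.
  by apply/negbTE/andP => -[/F2 + /eqP e0]; rewrite e0 cards0.
have [x xW deg_x] := low_deg W (subxx W) W_ne.
apply: leq_trans (card_edges_within_setD1 F2 xW) _.
rewrite (cardsD1 x W) xW mulnS addnC leq_add //.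
apply: IH => [|W' W'W]; first by move: Wn; rewrite (cardsD1 x W) xW.
by apply: low_deg; apply: subset_trans W'W (subsetDl _ _).
Qed.

Lemma trunc_log2_lt_pow16 n : 16 < n -> n < 16 ^ (trunc_log 2 n).+1./2.
Proof.
move=> n16; apply: leq_trans (@trunc_log_ltn 2 n isT) _.
have t_gt0 : 0 < trunc_log 2 n by rewrite trunc_log_gt0 /=; lia.
by rewrite (_ : 16 = 2 ^ 4) // -expnM leq_exp2l //; lia.
Qed.

Lemma card_le_no_short_cycle F : pair_edges F ->
  ~ has_short_cycle F (trunc_log 2 #|T|) -> #|F| <= 16 * #|T|.
Proof.
move=> F2 acyclic; set t := trunc_log 2 #|T|.
have -> : F = [set e in F | e \subset setT] by apply/setP => e; rewrite inE subsetT andbT.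
rewrite -cardsT; apply: card_edges_within_le => // W _ W_ne.
have [/exists_inP //|/exists_inPn deg_le] := boolP [exists x in W, #|nbrs F W x| <= 16].
have deg_gt : {in W, forall v, 16 < #|nbrs F W v|} by move=> v /deg_le; rewrite -ltnNge.
have [x xW] := set0Pn _ W_ne.
have many_ends : 16 ^ t.+1./2 <= #|T|.
  apply: leq_trans (max_card (mem (ends F W t.+1./2 x x))).
  by apply: ends_card F2 acyclic deg_gt _ xW; lia.
have := trunc_log2_lt_pow16 (leq_trans (deg_gt x xW) (max_card _)).
by rewrite ltnNge many_ends.
Qed.

Lemma path_setU1_split F e a s : path (adj (e |: F)) a s ->
  path (adj F) a s \/ exists x y n1 n2, [/\ x \in e /\ y \in e, n1 + n2 < size s,
    short_walk F n1 a x & short_walk F n2 y (last a s)].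
Proof.
elim: s a => [|c s IH] a /=; first by left.
case/andP => ac /IH {}IH.
have [acF|acNF] := boolP (adj F a c).
  case: IH => [cs|[x [y [n1 [n2 [xye n12 cx ys]]]]]]; first by left; apply/andP.
  right; exists x, y, n1.+1, n2; split => //.
  by rewrite -add1n; apply: short_walk_cat (short_walk_edge acF) cx.
have e_ac : [set a; c] = e.
  by move: ac; rewrite /adj in_setU1 => /orP[/eqP //|acF]; case/negP: acNF.
have [ae ce] : a \in e /\ c \in e by rewrite -e_ac set21 set22.
right; case: IH => [cs|[x [y [n1 [n2 [[_ ye] n12 _ ys]]]]]].
  by exists a, c, 0, (size s); split => //; [exact: short_walk0 | exists s].
exists a, y, 0, n2; split => //; last exact: short_walk0.
by rewrite add0n ltnS (leq_trans _ (ltnW n12)) ?leq_addl.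
Qed.

Lemma no_short_cycle_setU1 F t u v : u != v -> ~ has_short_cycle F t ->
  ~ short_walk F t u v -> ~ has_short_cycle ([set u; v] |: F) t.
Proof.
set e := [set u; v] => uv acyclic no_walk [a [b [abF walk_ab]]].
have [ab_e|ab_ne] := eqVneq [set a; b] e.
  apply/no_walk/(short_walk_set2 ab_e)/(short_walk_subset _ walk_ab).
  apply/subsetP => f; rewrite ab_e !inE => /andP[f_ne].
  by rewrite (negPf f_ne).
have abF' : [set a; b] \in F by move: abF; rewrite in_setU1 (negPf ab_ne).
have [s [s_path s_last st]] := walk_ab.
have s_path' : path (adj (e |: (F :\ [set a; b]))) a s.
  apply: sub_path s_path; apply: adj_subset; apply/subsetP => f.
  by rewrite !inE => /andP[-> /orP[->|->]]; rewrite ?orbT.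
have [s_pathF|[x [y [n1 [n2 [[xe ye] n12 ax yb]]]]]] := path_setU1_split s_path'.
  by apply: acyclic; exists a, b; split => //; exists s.
rewrite s_last in yb.
have [xy_eq|xy] := eqVneq x y.
  apply: acyclic; exists a, b; split => //; rewrite -xy_eq in yb.
  by apply: short_walk_le (short_walk_cat ax yb); lia.
(* the walk [x ~> a -- b ~> y] joins the two ends of the new edge *)
apply: no_walk; apply: (@short_walk_set2 _ _ x y).
  by apply/eqP; rewrite eqEcard subUset !sub1set xe ye !cards2 xy uv.
have FabF : F :\ [set a; b] \subset F by apply: subsetDl.
apply: (@short_walk_le _ (n1 + (1 + n2))); first by lia.
apply: short_walk_cat (short_walk_sym (short_walk_subset FabF ax)) _.
exact: short_walk_cat (short_walk_edge abF') (short_walk_subset FabF (short_walk_sym yb)).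
Qed.

Lemma greedy_spanner F t : 0 < t -> pair_edges F -> exists S,
  [/\ S \subset F, ~ has_short_cycle S t &
       forall u v, [set u; v] \in F -> short_walk S t u v].
Proof.
move=> t_gt0 F2.
suff greedy (es : seq {set T}) : {subset es <= F} -> exists S,
    [/\ S \subset F, ~ has_short_cycle S t &
         forall u v, [set u; v] \in es -> short_walk S t u v].
  have /greedy[S [SF acyclic bridge]] : {subset enum F <= F}.
    by move=> e; rewrite mem_enum.
  by exists S; split => // u v; rewrite -mem_enum; apply: bridge.
elim: es => [_|e es IH esF].
  by exists set0; split => [||u v //]; [exact: sub0set | case=> a [b []]; rewrite inE].
have [S [SF acyclic bridge]] := IH (fun f f_es => esF f (mem_behead (s := e :: es) f_es)).
have eF : e \in F := esF e (mem_head e es).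
have /eqP/cards2P[u [v [uv e_uv]]] := F2 e eF.
have [walk_uv|no_walk] := classic (short_walk S t u v).
  exists S; split => // u' v'; rewrite inE => /orP[/eqP uv'_e|]; last exact: bridge.
  by apply: short_walk_set2 walk_uv; rewrite -e_uv uv'_e.
exists (e |: S); split.
- by rewrite subUset sub1set eF SF.
- by rewrite e_uv; apply: no_short_cycle_setU1.
- move=> u' v'; rewrite inE => /orP[/eqP uv'_e|/bridge].
    by apply: short_walk_le t_gt0 _; apply: short_walk_edge; rewrite /adj uv'_e setU11.
  exact: short_walk_subset (subsetUr _ _).
Qed.

End StaticGraph.

Section TemporalSpanner.
Variables (T : finType) (lam : {set T} -> nat).
Implicit Types (E H S : {set {set T}}) (p q w : seq T).

Definition label_class E l := [set e in E | lam e == l].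

Lemma label_class_sub E l : label_class E l \subset E.
Proof. by apply/subsetP => e; rewrite inE => /andP[]. Qed.

Lemma label_classS E H l : E \subset H -> label_class E l \subset label_class H l.
Proof. by move=> /subsetP EH; apply/subsetP => e; rewrite !inE => /andP[/EH -> ->]. Qed.

Lemma tpath_from_mono E x l l' p :
  l <= l' -> tpath_from E lam x l' p -> tpath_from E lam x l p.
Proof.
by case: p => //= y p ll' /andP[/andP[-> l'y] ->]; rewrite (leq_trans ll' l'y).
Qed.

Lemma tpath_from_suffix E x l p1 p2 : tpath_from E lam x l (p1 ++ p2) ->
  exists2 l', l <= l' & tpath_from E lam (last x p1) l' p2.
Proof.
elim: p1 x l => [|y p1 IH] x l /=; first by exists l.
by case/andP => /andP[_ ll] /IH[l' yl' tp]; exists l' => //; apply: leq_trans ll yl'.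
Qed.

Lemma tpath_from_cut_loop E x l r : uniq r -> tpath_from E lam x l r -> exists q,
  [/\ uniq (x :: q), tpath_from E lam x l q, last x q = last x r & size q <= size r].
Proof.
move=> r_uniq tr; have [x_in|x_notin] := boolP (x \in r).
  case/splitPr: x_in r_uniq tr => r1 r2 r_uniq tr.
  rewrite -cat_rcons in tr; have [l' ll' tr2] := tpath_from_suffix tr.
  exists r2; split.
  - by move: r_uniq; rewrite cat_uniq => /and3P[].
  - by rewrite last_rcons in tr2; apply: tpath_from_mono ll' tr2.
  - by rewrite last_cat.
  - by rewrite size_cat /=; lia.
by exists r; rewrite /= x_notin r_uniq.
Qed.

Lemma tpath_from_shorten E x l p : tpath_from E lam x l p -> exists q,
  [/\ uniq (x :: q), tpath_from E lam x l q, last x q = last x p & size q <= size p].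
Proof.
elim: p x l => [|y p IH] x l /=; first by exists [::].
case/andP => /andP[xyE ll] /IH[q [yq_uniq tq <- qp]].
have tyq : tpath_from E lam x l (y :: q) by rewrite /= xyE ll.
have [q' [uq' tq' q'_last q'q]] := tpath_from_cut_loop yq_uniq tyq.
by exists q'; split => //; apply: leq_trans q'q _.
Qed.

Lemma tpath_from_cat_label_walk E l l' x w p :
  path (adj (label_class E l')) x w -> l <= l' ->
  tpath_from E lam (last x w) l' p -> tpath_from E lam x l (w ++ p).
Proof.
elim: w x l => [|y w IH] x l /=; first by move=> _; apply: tpath_from_mono.
rewrite /adj inE => /andP[/andP[xyE /eqP lab] yw] ll' tp.
by rewrite xyE lab ll' (IH _ _ yw).
Qed.

Lemma tpath_from_stretch E H t x l p :
  (forall u v, [set u; v] \in E -> short_walk (label_class H (lam [set u; v])) t u v) ->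
  tpath_from E lam x l p -> exists q,
    [/\ tpath_from H lam x l q, last x q = last x p & size q <= t * size p].
Proof.
move=> bridge; elim: p x l => [|y p IH] x l /=; first by exists [::]; rewrite muln0.
case/andP => /andP[xyE ll] /IH[q [tq <- qp]].
have [w [xw xw_last wt]] := bridge x y xyE.
exists (w ++ q); split.
- by apply: tpath_from_cat_label_walk xw ll _; rewrite xw_last.
- by rewrite last_cat xw_last.
- by rewrite size_cat mulnS leq_add.
Qed.

Lemma temporal_spanner_of_label_walks E H t : H \subset E ->
  (forall u v, [set u; v] \in E -> short_walk (label_class H (lam [set u; v])) t u v) ->
  temporal_spanner E lam H t.
Proof.
move=> HE bridge; split => // u v p /and3P[_ /eqP <- tp].
have [q [tq <- qp]] := tpath_from_stretch bridge tp.
have [q' [uq' tq' <- q'q]] := tpath_from_shorten tq.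
exists q'; split; last exact: leq_trans q'q qp.
by rewrite /is_tpath uq' tq' eqxx.
Qed.

Lemma sparse_label_spanner E l : 1 < #|T| -> pair_edges E -> exists S,
  [/\ S \subset label_class E l, #|S| <= 16 * #|T| &
      forall u v, [set u; v] \in label_class E l -> short_walk S (trunc_log 2 #|T|) u v].
Proof.
move=> T2 E2.
have El2 : pair_edges (label_class E l) by move=> e /(subsetP (label_class_sub E l)) /E2.
have t_gt0 : 0 < trunc_log 2 #|T| by rewrite trunc_log_gt0.
have [S [SEl acyclic bridge]] := greedy_spanner t_gt0 El2.
exists S; split => //; apply: card_le_no_short_cycle acyclic.
by move=> e /(subsetP SEl) /El2.
Qed.

Lemma label_spanners E (ls : seq nat) : 1 < #|T| -> pair_edges E -> exists H,
  [/\ H \subset E, #|H| <= 16 * #|T| * size ls &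
      forall u v, [set u; v] \in E -> lam [set u; v] \in ls ->
        short_walk (label_class H (lam [set u; v])) (trunc_log 2 #|T|) u v].
Proof.
move=> T2 E2; elim: ls => [|l ls [H [HE H_card bridge]]].
  by exists set0; rewrite sub0set cards0.
have [S [SEl S_card S_bridge]] := sparse_label_spanner l T2 E2.
have SE := subset_trans SEl (label_class_sub E l).
exists (S :|: H); split.
- by rewrite subUset SE HE.
- by apply: leq_trans (leq_card_setU _ _) _; rewrite /= mulnS leq_add.
move=> u v uvE; rewrite inE => /orP[/eqP lab|l_ls].
  apply: short_walk_subset (S_bridge u v _); last by rewrite inE uvE lab eqxx.
  rewrite lab; apply/subsetP => e eS; have := subsetP SEl e eS.
  by rewrite !inE eS => /andP[_ ->].
exact: short_walk_subset (label_classS _ (subsetUr S H)) (bridge u v uvE l_ls).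
Qed.

End TemporalSpanner.

Theorem corollary23 :
  exists C : nat,
    forall (T : finType) (E : {set {set T}}) (lam : {set T} -> nat),
      temporal_graph E lam ->
      exists H : {set {set T}},
        temporal_spanner E lam H (trunc_log 2 #|T|) /\
        #|H| <= C * (lifetime E lam * #|T|).
Proof.
exists 16 => T E lam G.
have E2 : pair_edges E by move=> e /G[].
have [T_small|T2] := ltnP #|T| 2.
  have E0 := pair_edges_card_lt2 E2 T_small.
  exists E; split; last by rewrite E0 cards0.
  by apply: temporal_spanner_of_label_walks => // u v; rewrite E0 inE.
have [H [HE H_card bridge]] := label_spanners lam (undup [seq lam e | e <- enum E]) T2 E2.
exists H; split.
  apply: temporal_spanner_of_label_walks => // u v uvE; apply: bridge => //.
  by rewrite mem_undup; apply/mapP; exists [set u; v]; rewrite ?mem_enum.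
by rewrite /lifetime [_ * #|T|]mulnC mulnA.
Qed.
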